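(* For a positive integer $n$, let \[ Z^{+}(n)=\sum_{k=0}^{n-1}\frac{(-1)^{k}+k!\,(n-k-1)!}{n}. \] Then $Z^{+}(n)$ is a natural number if and only if $n$ is even or $n$ is non-composite (i.e. $n=1$ or $n$ is prime).
   Context: $Z^{+}(n)=\sum_{k=0}^{n-1}(-1)^kM_k(n)$ where $M_{k}(n)=\frac{1+(-1)^{k}k!(n-k-1)!}{n}$ for $0\le k\le n-1$. *)

From mathcomp Require Import all_boot all_order all_algebra.
Set Implicit Arguments. Unset Strict Implicit. Unset Printing Implicit Defensive.
Import Order.TTheory GRing.Theory Num.Theory.
Local Open Scope ring_scope.

Definition Zplus (n : nat) : rat :=
  \sum_(k < n) (((-1) ^+ k + ((k`! * (n - k - 1)`!)%N)%:R) / n%:R).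

(** The numerator of [Z^+(n)] is [odd n + S n] with [S n = \sum_(k < n) k! (n-k-1)!].
  For [n = 2h] the terms [k] and [n-1-k] of [S n] coincide and are multiples of [h],
  so [n] divides [S n].  For composite [n] with smallest prime factor [p], [p * p <= n]
  forces [p] to divide every term of [S n], hence [p] cannot divide [1 + S n].
  For an odd prime [p], [k! (p-k-1)! = - (k+1)! (p-k-2)!] mod [p] and Wilson's theorem
  give [k! (p-k-1)! = (-1)^(k+1)] mod [p], so [1 + S p = 1 - 1 = 0] mod [p]. *)

From mathcomp Require Import all_boot all_order all_algebra.
From mathcomp Require Import zify.
Import GRing.Theory Num.Theory.
Local Open Scope ring_scope.

Definition fact_prod (n k : nat) : nat := (k`! * (n - k - 1)`!)%N.

Definition fact_prod_sum (n : nat) : nat := (\sum_(k < n) fact_prod n k)%N.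

Lemma sum_signr (R : pzRingType) (n : nat) :
  \sum_(k < n) (-1 : R) ^+ k = (odd n)%:R.
Proof.
elim: n => [|n IHn]; first by rewrite big_ord0.
rewrite big_ord_recr /= IHn -signr_odd.
by case: (odd n); rewrite /= ?expr0 ?expr1 ?addrN ?add0r.
Qed.

Lemma ZplusE (n : nat) : Zplus n = (odd n + fact_prod_sum n)%:R / n%:R.
Proof. by rewrite /Zplus -mulr_suml big_split /= sum_signr natrD natr_sum. Qed.

Lemma natr_div_natP (F : numFieldType) (a n : nat) : (0 < n)%N ->
  (exists m : nat, a%:R / n%:R = m%:R :> F) <-> (n %| a)%N.
Proof.
move=> n_gt0; have n_neq0 : n%:R != 0 :> F by rewrite pnatr_eq0 -lt0n.
split=> [[m /(canRL (divfK n_neq0))] | /dvdnP[m ->]]; last by exists m; rewrite natrM mulfK.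
by rewrite -natrM => /eqP; rewrite eqr_nat => /eqP ->; apply: dvdn_mull.
Qed.

Lemma Zplus_natP (n : nat) : (0 < n)%N ->
  (exists m : nat, Zplus n = m%:R) <-> (n %| odd n + fact_prod_sum n)%N.
Proof. by move=> n_gt0; rewrite ZplusE; apply: natr_div_natP. Qed.

Lemma fact_prod_rev (n k : nat) : (k < n)%N -> fact_prod n (n.-1 - k) = fact_prod n k.
Proof.
move=> lt_kn; rewrite /fact_prod mulnC.
have -> : (n - (n.-1 - k) - 1 = k)%N by lia.
by have -> : (n.-1 - k = n - k - 1)%N by lia.
Qed.

Lemma dvdn_fact_prod (d n k : nat) : (0 < d)%N -> (d.*2 <= n)%N -> (d %| fact_prod n k)%N.
Proof.
move=> d_gt0 le_2d_n; rewrite /fact_prod.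
have [lt_kd | le_dk] := ltnP k d.
- by apply/dvdn_mull/dvdn_fact; lia.
- exact/dvdn_mulr/dvdn_fact/andP.
Qed.

Lemma fact_prod_sum_double (h : nat) :
  fact_prod_sum h.*2 = ((\sum_(k < h) fact_prod h.*2 k) * 2)%N.
Proof.
rewrite /fact_prod_sum -addnn big_split_ord muln2 -addnn; congr (_ + _)%N.
rewrite (reindex_inj rev_ord_inj); apply: eq_bigr => k _ /=.
rewrite -[in RHS]fact_prod_rev ?ltn_addr //; congr fact_prod.
by have := ltn_ord k; lia.
Qed.

Lemma dvdn_fact_prod_sum_even (n : nat) :
  (0 < n)%N -> ~~ odd n -> (n %| fact_prod_sum n)%N.
Proof.
move=> n_gt0 n_even.
have n_double : n = n./2.*2 by rewrite -[LHS]odd_double_half (negbTE n_even).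
rewrite n_double fact_prod_sum_double -[X in (X %| _)%N]muln2 dvdn_pmul2r //.
by apply: dvdn_sum => k _; apply: dvdn_fact_prod; lia.
Qed.

Lemma ndvdn_add1_fact_prod_sum_composite (n : nat) :
  (1 < n)%N -> ~~ prime n -> ~~ (n %| 1 + fact_prod_sum n)%N.
Proof.
move=> n_gt1 n_composite; have p_prime := pdiv_prime n_gt1.
have p_gt1 := prime_gt1 p_prime.
have le_pp_n : (pdiv n * pdiv n <= n)%N.
  rewrite leqNgt; apply: contra n_composite => lt_n_pp.
  by apply: ltn_pdiv2_prime; rewrite ?expnS ?expn1; lia.
have p_dvd_sum : (pdiv n %| fact_prod_sum n)%N.
  by apply: dvdn_sum => k _; apply: dvdn_fact_prod; nia.
apply/negP => /(dvdn_trans (pdiv_dvd n)).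
by rewrite dvdn_addl // dvdn1; lia.
Qed.

Lemma fact_prod_add_succ (n k : nat) : (k.+1 < n)%N ->
  (fact_prod n k + fact_prod n k.+1 = k`! * (n - k.+2)`! * n)%N.
Proof.
move=> lt_k1_n; rewrite /fact_prod (factS k).
have -> : (n - k - 1 = (n - k.+2).+1)%N by lia.
have -> : (n - k.+1 - 1 = n - k.+2)%N by lia.
rewrite factS; nia.
Qed.

Lemma natr_fact_prod_pchar (R : nzRingType) (p k : nat) : p \in [pchar R] ->
  (k < p)%N -> (fact_prod p k)%:R = (-1) ^+ k.+1 :> R.
Proof.
move=> chRp; elim: k => [|k IHk] lt_k_p.
- have p_prime := pcharf_prime chRp.
  have : (p %| (p.-1)`!.+1)%N by rewrite -Wilson ?prime_gt1.
  rewrite (dvdn_pcharf chRp) -addn1 natrD addr_eq0 => /eqP <-.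
  by rewrite /fact_prod fact0 mul1n subn0 subn1.
- have := @fact_prod_add_succ p k lt_k_p => /(congr1 (fun m => m%:R : R)).
  rewrite natrM (pcharf0 chRp) mulr0 natrD addrC => /eqP.
  rewrite addr_eq0 IHk 1?ltnW //.
  by move=> /eqP ->; rewrite [RHS]exprS mulN1r.
Qed.

Lemma dvdn_add1_fact_prod_sum_prime (p : nat) :
  prime p -> odd p -> (p %| 1 + fact_prod_sum p)%N.
Proof.
move=> p_prime p_odd; have chFp := pchar_Fp p_prime.
rewrite (dvdn_pcharf chFp) natrD natr_sum.
rewrite (eq_bigr (fun k : 'I_p => (-1) ^+ k.+1)) => [|k _]; last exact: natr_fact_prod_pchar.
under eq_bigr do rewrite exprS mulN1r.
by rewrite sumrN sum_signr p_odd addrN.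
Qed.

Theorem theorem2 (n : nat) (hn : (0 < n)%N) :
  (exists m : nat, Zplus n = m%:R) <-> (~~ odd n \/ n = 1%N \/ prime n).
Proof.
rewrite Zplus_natP //; split=> [n_dvd | ].
- case: (boolP (odd n)) => [n_odd | ]; last by left.
  right; have [n_le1 | n_gt1] := leqP n 1; first by left; lia.
  right; apply: contraTT n_dvd => n_composite.
  by rewrite n_odd; exact: ndvdn_add1_fact_prod_sum_composite.
- case=> [n_even | [-> // | n_prime]].
  + by rewrite (negbTE n_even); exact: dvdn_fact_prod_sum_even.
  + case: (boolP (odd n)) => n_odd; first exact: dvdn_add1_fact_prod_sum_prime.
    exact: dvdn_fact_prod_sum_even.
Qed.
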